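(* Let $\epsilon=(\epsilon_n)\in(0,1]^{\mathbb{N}}$ and $\omega\in\beta\mathbb{N}$. The complete residue field $\mathscr{H}(\omega)$ is algebraically closed and spherically complete, and $|\mathscr{H}(\omega)|=\mathbb{R}_+$. Moreover: (1) if $e=\lim_\omega\epsilon_n>0$, then $\mathscr{H}(\omega)$ is isometric to $(\mathbb{C},|\cdot|^e)$, hence is an Archimedean metrized field; (2) if $\lim_\omega\epsilon_n=0$, then $\mathscr{H}(\omega)$ is a non-Archimedean metrized field.
   Context: $A^\epsilon=\{(x_n)\in\mathbb{C}^{\mathbb{N}}:\sup_n|x_n|^{\epsilon_n}<\infty\}$ with norm $\|x\|=\sup_n|x_n|^{\epsilon_n}$ ($|\cdot|$ the Euclidean norm). $\beta\mathbb{N}$ is the set of ultrafilters on $\mathbb{N}$; for $\omega\in\beta\mathbb{N}$, $\lim_\omega$ denotes the limit along $\omega$. Each $\omega$ defines the bounded multiplicative seminorm $|x|_\omega=\lim_\omega|x_n|^{\epsilon_n}$ on $A^\epsilon$, with kernel $\ker(\omega)=\{x:\lim_\omega|x_n|^{\epsilon_n}=0\}$; $\mathscr{H}(\omega)$ is the completion of the fraction field of $A^\epsilon/\ker(\omega)$ for the induced norm. A metrized field is spherically complete if every decreasing sequence of closed balls has nonempty intersection. *)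

From HB Require Import structures.
From mathcomp Require Import all_boot all_order all_algebra.
From mathcomp Require Import all_classical all_reals all_analysis.
From mathcomp Require Import complex.
Set Implicit Arguments. Unset Strict Implicit. Unset Printing Implicit Defensive.
Import Order.TTheory GRing.Theory Num.Theory.
Import numFieldTopology.Exports numFieldNormedType.Exports.
Local Open Scope classical_set_scope.
Local Open Scope ring_scope.

Definition cmod (R : realType) (z : R[i]) : R :=
  Num.sqrt (complex.Re z ^+ 2 + complex.Im z ^+ 2).

Definition Aeps (R : realType) (eps : nat -> R) : set (nat -> R[i]) :=
  [set x | exists M : R, forall n, cmod (x n) `^ eps n <= M].

Definition ulim (R : realType) (omega : set_system nat) (u : nat -> R) : R :=
  lim (u @ omega).

Definition absw (R : realType) (eps : nat -> R) (omega : set_system nat)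
  (x : nat -> R[i]) : R :=
  ulim omega (fun n => cmod (x n) `^ eps n).

Definition metrized_field_norm (R : realType) (K : fieldType) (v : K -> R) : Prop :=
  [/\ forall x, 0 <= v x,
      forall x, v x = 0 <-> x = 0,
      forall x y, v (x * y) = v x * v y
    & forall x y, v (x + y) <= v x + v y].

Definition non_archimedean (R : realType) (K : fieldType) (v : K -> R) : Prop :=
  forall x y, v (x + y) <= Num.max (v x) (v y).

Definition archimedean_norm (R : realType) (K : fieldType) (v : K -> R) : Prop :=
  ~ non_archimedean v.

Definition complete_for (R : realType) (K : fieldType) (v : K -> R) : Prop :=
  forall u : nat -> K,
    (forall e : R, 0 < e -> exists N, forall m n, (N <= m)%N -> (N <= n)%N ->
        v (u m - u n) < e) ->
    exists l : K, forall e : R, 0 < e -> exists N, forall n, (N <= n)%N ->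
        v (u n - l) < e.

Definition cball (R : realType) (K : fieldType) (v : K -> R) (a : K) (r : R) : set K :=
  [set x | v (x - a) <= r].

Definition spherically_complete (R : realType) (K : fieldType) (v : K -> R) : Prop :=
  forall (a : nat -> K) (r : nat -> R),
    (forall n, 0 < r n) ->
    (forall n, cball v (a n.+1) (r n.+1) `<=` cball v (a n) (r n)) ->
    exists x : K, forall n, cball v (a n) (r n) x.

(* (K, v) together with phi : A^eps -> K is a model of the complete residue
   field H(omega): K is a complete metrized field, phi is a ring morphism on
   A^eps with |phi x| = |x|_omega (so phi factors through an isometric
   embedding of A^eps / ker(omega), hence of its fraction field), and the
   fractions phi(a)/phi(b) are dense in K.  Such (K, v) is exactly the
   completion of Frac(A^eps/ker omega), unique up to isometric isomorphism. *)
Definition is_Homega (R : realType) (eps : nat -> R) (omega : set_system nat)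
  (K : fieldType) (v : K -> R) (phi : (nat -> R[i]) -> K) : Prop :=
  [/\ metrized_field_norm v /\ complete_for v,
      phi (fun _ => 1) = 1,
      (forall x y, Aeps eps x -> Aeps eps y ->
          phi (fun n => x n + y n) = phi x + phi y
       /\ phi (fun n => x n * y n) = phi x * phi y),
      (forall x, Aeps eps x -> v (phi x) = absw eps omega x)
    & (forall (z : K) (e : R), 0 < e -> exists a b,
          [/\ Aeps eps a, Aeps eps b, phi b != 0 & v (z - phi a / phi b) < e])].

From HB Require Import structures.
From mathcomp Require Import all_boot all_order all_algebra.
From mathcomp Require Import all_classical all_reals all_analysis.
From mathcomp Require Import complex.
Import Order.TTheory GRing.Theory Num.Theory.
Import numFieldTopology.Exports numFieldNormedType.Exports.
Local Open Scope classical_set_scope.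
Local Open Scope ring_scope.
Set Implicit Arguments.
Unset Strict Implicit.
Unset Printing Implicit Defensive.

(* |x|_omega is the ultralimit of the norms |x_n|^{eps_n} (t |-> t^p is subadditive for
   p <= 1), and bounded real sequences converge along an ultrafilter.  Everything rests on
   the image phi(A^eps) being dense in H(omega) and containing a common point of every chain
   of closed balls centered in it: the image is then all of H(omega), which is spherically
   complete.
   - If e = lim_omega eps_n > 0, phi(x) only depends on the ultralimit c of the bounded
     sequence x_n in C, and c |-> phi(c, c, ...) is an isometry (C, |.|^e) -> H(omega);
     chains of balls in C have a common point, the ultralimit of their centers along a
     non-principal ultrafilter.
   - If e = 0, omega is non-principal and a diagonal argument gives the common point.
   Roots of monic polynomials are taken coordinatewise (Cauchy's bound keeps them in A^eps),
   the sequence (r^{1/eps_n}) has norm r, and when e = 0 the bound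
   |x + y|^{eps_n} <= 2^{eps_n} max(|x|^{eps_n}, |y|^{eps_n}) with 2^{eps_n} -> 1 gives the
   ultrametric inequality. *)

Section Cmod.
Variable R : realType.
Implicit Types (x y : R[i]) (a : R).

Lemma cmodE x : cmod x = Normc.normc x.
Proof. by case: x. Qed.

Lemma cmod_ge0 x : 0 <= cmod x.
Proof. exact: sqrtr_ge0. Qed.

Lemma cmod_eq0 x : cmod x = 0 -> x = 0.
Proof. by rewrite cmodE => /Normc.eq0_normc. Qed.

Lemma cmod0 : cmod (0 : R[i]) = 0.
Proof. by rewrite cmodE Normc.normc0. Qed.

Lemma cmod1 : cmod (1 : R[i]) = 1.
Proof. by rewrite cmodE Normc.normc1. Qed.

Lemma cmodN x : cmod (- x) = cmod x.
Proof. by rewrite !cmodE normcN. Qed.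

Lemma cmodM x y : cmod (x * y) = cmod x * cmod y.
Proof. by rewrite !cmodE Normc.normcM. Qed.

Lemma cmodV x : cmod x^-1 = (cmod x)^-1.
Proof. by rewrite !cmodE Normc.normcV. Qed.

Lemma cmodX x k : cmod (x ^+ k) = cmod x ^+ k.
Proof. by elim: k => [|k IH]; rewrite ?expr0 ?cmod1 // !exprS cmodM IH. Qed.

Lemma cmodR a : cmod (a%:C)%C = `|a|.
Proof. by rewrite /cmod /= expr0n /= addr0 sqrtr_sqr. Qed.

Lemma ler_cmodD x y : cmod (x + y) <= cmod x + cmod y.
Proof. by rewrite !cmodE le_normcD. Qed.

Lemma ler_cmod_sum k (c : nat -> R[i]) :
  cmod (\sum_(i < k) c i) <= \sum_(i < k) cmod (c i).
Proof.
elim: k => [|k IH]; first by rewrite !big_ord0 cmod0.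
by rewrite !big_ord_recr /=; apply: le_trans (ler_cmodD _ _) (lerD IH _).
Qed.

Lemma ler_Re_cmod x : `|complex.Re x| <= cmod x.
Proof. by rewrite /cmod -sqrtr_sqr ler_sqrt ?addr_ge0 ?sqr_ge0 // lerDl sqr_ge0. Qed.

Lemma ler_Im_cmod x : `|complex.Im x| <= cmod x.
Proof. by rewrite /cmod -sqrtr_sqr ler_sqrt ?addr_ge0 ?sqr_ge0 // lerDr sqr_ge0. Qed.

Lemma ler_cmod_ReIm x : cmod x <= `|complex.Re x| + `|complex.Im x|.
Proof.
rewrite -(ler_pXn2r (n := 2)) ?nnegrE ?cmod_ge0 ?addr_ge0 //.
rewrite /cmod sqr_sqrtr ?addr_ge0 ?sqr_ge0 // sqrrD !real_normK ?num_real //.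
by rewrite -addrA lerD2l lerDr mulrn_wge0 // mulr_ge0.
Qed.

Lemma cauchy_root_bound (y : R[i]) (c : nat -> R[i]) n :
  y ^+ n = \sum_(i < n) c i * y ^+ i -> cmod y <= 1 + \sum_(i < n) cmod (c i).
Proof.
move=> hy; have S0 : 0 <= \sum_(i < n) cmod (c i) by rewrite sumr_ge0 // => i _; apply: cmod_ge0.
have [y1|y1] := leP (cmod y) 1; first by rewrite (le_trans y1) // lerDl.
case: n hy S0 => [|n] hy S0; first by move/eqP: hy; rewrite expr0 big_ord0 oner_eq0.
apply: le_trans (_ : _ <= \sum_(i < n.+1) cmod (c i)) _; last by rewrite lerDr.
have yn0 : 0 < cmod y ^+ n by rewrite exprn_gt0 // (lt_trans ltr01 y1).
rewrite -(ler_pM2r yn0) -exprS -[_ ^+ n.+1]cmodX hy mulr_suml.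
apply: le_trans (ler_cmod_sum n.+1 (fun i => c i * y ^+ i)) _; apply: ler_sum => i _.
by rewrite cmodM cmodX ler_wpM2l ?cmod_ge0 // ler_eXn2l // -ltnS.
Qed.

End Cmod.

Section PowR.
Variable R : realType.
Implicit Types a b p q r : R.

Lemma ler_powRl p a b : 0 <= p -> 0 <= a -> a <= b -> a `^ p <= b `^ p.
Proof. by move=> p0 a0 ab; apply: ge0_ler_powR; rewrite ?nnegrE ?(le_trans a0 ab). Qed.

Lemma ge0_ger_powR a p q : 0 <= a <= 1 -> 0 < q <= p -> a `^ p <= a `^ q.
Proof.
move=> /andP[a0 a1] /andP[q0 qp]; have [->|an0] := eqVneq a 0.
  by rewrite !powR0 ?gt_eqF // (lt_le_trans q0 qp).
by apply: ger_powR => //; rewrite lt_neqAle eq_sym an0 a0.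
Qed.

Lemma powRV a p : 0 <= a -> a^-1 `^ p = (a `^ p)^-1.
Proof. by move=> a0; rewrite -powR_inv1 // -powRrM mulN1r powRN. Qed.

Lemma ler_powRV p a r : 0 < p -> 0 <= a -> 0 <= r ->
  (a <= r `^ p^-1) = (a `^ p <= r).
Proof.
move=> p0 a0 r0; apply/idP/idP => h.
  rewrite -[r](@powRr1 _ r) // -[1](@mulVf _ p) ?gt_eqF // powRrM.
  exact: ler_powRl (ltW p0) a0 h.
rewrite -[a](@powRr1 _ a) // -[1](@mulfV _ p) ?gt_eqF // powRrM.
by apply: ler_powRl; rewrite ?invr_ge0 ?(ltW p0) ?powR_ge0.
Qed.

(* Normalize to a + b = 1 and use t <= t^p on [0, 1]. *)
Lemma powRD_le p a b : 0 < p <= 1 -> 0 <= a -> 0 <= b ->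
  (a + b) `^ p <= a `^ p + b `^ p.
Proof.
move=> /andP[p0 p1] a0 b0; set s := a + b.
have [->|s0] := eqVneq s 0; first by rewrite powR0 ?gt_eqF ?addr_ge0 ?powR_ge0.
have sp : 0 < s by rewrite lt_neqAle eq_sym s0 addr_ge0.
have le_self t : 0 <= t <= s -> t / s <= t `^ p * s^-1 `^ p.
  move=> /andP[t0 ts]; rewrite -powRM ?invr_ge0 ?(ltW sp) //.
  have [->|tn0] := eqVneq t 0; first by rewrite mul0r powR_ge0.
  by apply: ger1_powR; rewrite ?divr_gt0 ?ler_pdivrMr // ?mul1r // lt_neqAle eq_sym tn0.
have : 1 <= (a `^ p + b `^ p) * s^-1 `^ p.
  rewrite -(divff s0) mulrDl mulrDl lerD // le_self ?a0 ?b0 ?lerDl ?lerDr //.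
by rewrite powRV ?(ltW sp) // ler_pdivlMr ?powR_gt0 // mul1r.
Qed.

Lemma powR_sum_le p k (a : nat -> R) : 0 < p <= 1 -> (forall i, 0 <= a i) ->
  (\sum_(i < k) a i) `^ p <= \sum_(i < k) a i `^ p.
Proof.
move=> hp a0; elim: k => [|k IH].
  by rewrite !big_ord0 powR0 // gt_eqF //; case/andP: hp.
rewrite !big_ord_recr /=; apply: le_trans (powRD_le hp _ (a0 _)) _.
  by rewrite sumr_ge0.
exact: lerD.
Qed.

Lemma ler_add_harmonic a c C N :
  (forall j, (N <= j)%N -> a <= c + C / j.+1%:R) -> a <= c.
Proof.
move=> h; have hc : (fun j => c + C * harmonic j) @ \oo --> c.
  rewrite -[X in _ --> X]addr0 -[X in _ + X](mulr0 C).
  by apply: cvgD; [exact: cvg_cst | apply: cvgM; [exact: cvg_cst | exact: cvg_harmonic]].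
by apply: (cvgr_to_ge hc); near=> j; apply: h; near: j; exists N.
Unshelve. all: by end_near.
Qed.

End PowR.

Lemma fmap_ultra (T U : Type) (F : set_system T) (f : T -> U) :
  UltraFilter F -> UltraFilter (f @ F).
Proof.
move=> FU; split; first exact: fmap_proper_filter.
move=> G GP sFG; rewrite eqEsubset; split => [A GA|]; last exact: sFG.
have [//|FnA] := in_ultra_setVsetC (f @^-1` A) FU.
have : G (A `&` ~` A) by apply: filterI => //; apply: sFG.
by rewrite setICr => /(@filter_ex _ _ GP)[].
Qed.

Section UltraLimit.
Variables (R : realType) (F : set_system nat).
Hypothesis F_ultra : UltraFilter F.

(* Compactness of [-M, M]. *)
Lemma cvg_ulim (u : nat -> R) M :
  (\forall n \near F, `|u n| <= M) -> u @ F --> ulim F u.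
Proof.
move=> uM; have := @segment_compact R (- M) M.
rewrite compact_ultra => /(_ _ (fmap_ultra u F_ultra)) [|l [_ ul]].
  by apply: filterS uM => n /=; rewrite in_itv /= -ler_norml.
by rewrite /ulim (cvg_lim _ ul).
Qed.

Lemma ulimE (u : nat -> R) l : u @ F --> l -> ulim F u = l.
Proof. exact: cvg_lim. Qed.

Definition clim (c : nat -> R[i]) : R[i] :=
  (ulim F (fun m => complex.Re (c m)) +i* ulim F (fun m => complex.Im (c m)))%C.

Lemma near_clim (c : nat -> R[i]) B e :
  (\forall m \near F, cmod (c m) <= B) -> 0 < e ->
  \forall m \near F, cmod (c m - clim c) < e.
Proof.
move=> cB e0; have e20 : 0 < e / 2 by rewrite divr_gt0.
have near_part (f : R[i] -> R) : (forall z, `|f z| <= cmod z) ->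
    \forall m \near F, `|f (c m) - ulim F (fun m => f (c m))| < e / 2.
  move=> fz; have /cvgr_dist_lt/(_ _ e20) : (fun m => f (c m)) @ F --> ulim F (fun m => f (c m)).
    by apply: (@cvg_ulim _ B); apply: filterS cB => m; apply: le_trans.
  by apply: filterS => m; rewrite distrC.
near=> m; apply: (le_lt_trans (ler_cmod_ReIm _)); rewrite [e]splitr.
have -> : complex.Re (c m - clim c) = complex.Re (c m) - ulim F (fun m => complex.Re (c m)).
  by case: (c m).
have -> : complex.Im (c m - clim c) = complex.Im (c m) - ulim F (fun m => complex.Im (c m)).
  by case: (c m).
by apply: ltrD; near: m; apply: near_part; [exact: ler_Re_cmod | exact: ler_Im_cmod].
Unshelve. all: by end_near.
Qed.

Lemma ler_clim_dist (c : nat -> R[i]) B d r :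
  (\forall m \near F, cmod (c m) <= B) ->
  (\forall m \near F, cmod (c m - d) <= r) -> cmod (clim c - d) <= r.
Proof.
move=> cB cd; apply/ler_addgt0Pr => e e0.
have [m [cm mclim]] := filter_ex (filterI cd (near_clim cB e0)).
rewrite -(subrK (c m) (clim c)) -addrA addrC.
by apply: le_trans (ler_cmodD _ _) _; rewrite lerD // -cmodN opprB ltW.
Qed.

End UltraLimit.

Section MetrizedField.
Variables (R : realType) (K : fieldType) (v : K -> R).
Hypothesis v_norm : metrized_field_norm v.
Implicit Types x y z : K.

Lemma v_ge0 x : 0 <= v x.
Proof. by case: v_norm. Qed.

Lemma v_eq0 x : v x = 0 <-> x = 0.
Proof. by case: v_norm. Qed.

Lemma vM x y : v (x * y) = v x * v y.
Proof. by case: v_norm. Qed.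

Lemma vD x y : v (x + y) <= v x + v y.
Proof. by case: v_norm. Qed.

Lemma v0 : v 0 = 0.
Proof. exact/v_eq0. Qed.

Lemma v1 : v 1 = 1.
Proof.
have v10 : v 1 != 0 by apply/eqP => /v_eq0/eqP; rewrite oner_eq0.
by apply: (mulfI v10); rewrite -vM !mulr1.
Qed.

Lemma vN x : v (- x) = v x.
Proof.
have vN1 : v (-1) = 1.
  have /eqP : v (-1) ^+ 2 = 1 by rewrite expr2 -vM mulrNN mulr1 v1.
  by rewrite sqrf_eq1 => /orP[/eqP //|/eqP h]; move: (v_ge0 (-1)); rewrite h ler0N1.
by rewrite -mulN1r vM vN1 mul1r.
Qed.

Lemma v_subC x y : v (x - y) = v (y - x).
Proof. by rewrite -vN opprB. Qed.

Lemma v_sub_tri x y z : v (x - z) <= v (x - y) + v (y - z).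
Proof. by have := vD (x - y) (y - z); rewrite addrA subrK. Qed.

Lemma v_sub_le0 x y : v (x - y) <= 0 -> x = y.
Proof. by move=> h; apply/eqP; rewrite -subr_eq0; apply/eqP/v_eq0/eqP; rewrite eq_le h v_ge0. Qed.

Definition nested_ball_complete (S : set K) : Prop :=
  forall (a : nat -> K) (r : nat -> R), (forall k, S (a k)) ->
    (forall k m, (k <= m)%N -> v (a m - a k) <= r k) ->
    exists2 x, S x & forall k, v (x - a k) <= r k.

Lemma dense_nested_ball_complete_full (S : set K) :
  (forall z e, 0 < e -> exists2 a, S a & v (z - a) < e) ->
  nested_ball_complete S -> S = setT.
Proof.
move=> Sdense Snest; apply/seteqP; split => // z _.
have /choice[a az] : forall k, exists a, S a /\ v (z - a) < k.+1%:R^-1.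
  by move=> k; have [a ? ?] := Sdense z _ (harmonic_gt0 k); exists a.
have acauchy k m : (k <= m)%N -> v (a m - a k) <= 2 / k.+1%:R.
  move=> km; apply: le_trans (v_sub_tri _ z _) _; rewrite v_subC.
  rewrite [2]mulr2n mulrDl mul1r lerD ?ltW ?(az k).2 //.
  by apply: lt_le_trans (az m).2 _; rewrite lef_pV2 ?posrE ?ltr0n // ler_nat ltnS.
have [x Sx xa] := Snest a _ (fun k => (az k).1) acauchy.
suff -> : z = x by [].
apply: v_sub_le0; apply: (@ler_add_harmonic _ _ _ (1 + 2) 0) => k _.
apply: le_trans (v_sub_tri _ (a k) _) _.
by rewrite add0r mulrDl mul1r lerD ?(ltW (az k).2) // v_subC.
Qed.

Lemma nested_ball_complete_spherically_complete :
  nested_ball_complete setT -> spherically_complete v.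
Proof.
move=> Tnest a r r0 rdecr.
have nested k d : cball v (a (k + d)%N) (r (k + d)%N) `<=` cball v (a k) (r k).
  elim: d => [|d IH]; first by rewrite addn0.
  by rewrite addnS; apply: subset_trans (rdecr _) IH.
have ball_chain k m : (k <= m)%N -> v (a m - a k) <= r k.
  by move=> /subnKC <-; apply: (nested k (m - k)%N); rewrite /cball /= subrr v0 ltW.
by have [x _ xa] := Tnest a r (fun=> I) ball_chain; exists x.
Qed.

End MetrizedField.

Section Aeps.
Variables (R : realType) (eps : nat -> R).
Hypothesis eps01 : forall n, 0 < eps n <= 1.

Definition absn n (z : R[i]) : R := cmod z `^ eps n.

Lemma eps_gt0 n : 0 < eps n.
Proof. by case/andP: (eps01 n). Qed.

Lemma absn_ge0 n z : 0 <= absn n z.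
Proof. exact: powR_ge0. Qed.

Lemma absn0 n : absn n 0 = 0.
Proof. by rewrite /absn cmod0 powR0 ?gt_eqF ?eps_gt0. Qed.

Lemma absnN n z : absn n (- z) = absn n z.
Proof. by rewrite /absn cmodN. Qed.

Lemma absnM n x y : absn n (x * y) = absn n x * absn n y.
Proof. by rewrite /absn cmodM powRM ?cmod_ge0. Qed.

Lemma ler_absn n x y : cmod x <= cmod y -> absn n x <= absn n y.
Proof. by apply: ler_powRl; rewrite ?cmod_ge0 ?(ltW (eps_gt0 n)). Qed.

Lemma absnD n x y : absn n (x + y) <= absn n x + absn n y.
Proof.
apply: le_trans (powRD_le (eps01 n) (cmod_ge0 x) (cmod_ge0 y)).
by apply: ler_powRl; rewrite ?cmod_ge0 ?ler_cmodD ?(ltW (eps_gt0 n)).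
Qed.

Lemma absnD_le2 n x y :
  cmod x <= cmod y -> absn n (x + y) <= 2 `^ eps n * absn n y.
Proof.
move=> xy; rewrite /absn -powRM ?cmod_ge0 //.
apply: ler_powRl; rewrite ?cmod_ge0 ?(ltW (eps_gt0 n)) //.
by rewrite (le_trans (ler_cmodD _ _)) // mulr2n mulrDl mul1r lerD.
Qed.

Lemma Aeps_cst z : Aeps eps (fun=> z).
Proof.
exists (Num.max 1 (cmod z)) => n; rewrite -/(absn n z) le_max.
have [z1|z1] := leP (cmod z) 1.
  apply/orP; left; apply: le_trans (ler_powRl (ltW (eps_gt0 n)) (cmod_ge0 z) z1) _.
  by rewrite powR1.
by apply/orP; right; apply: ler1_powR; [exact: ltW | case/andP: (eps01 n)].
Qed.

Lemma AepsD x y : Aeps eps x -> Aeps eps y -> Aeps eps (fun n => x n + y n).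
Proof.
move=> [M xM] [N yN]; exists (M + N) => n.
exact: le_trans (absnD _ _ _) (lerD (xM n) (yN n)).
Qed.

Lemma AepsM x y : Aeps eps x -> Aeps eps y -> Aeps eps (fun n => x n * y n).
Proof.
move=> [M xM] [N yN]; exists (M * N) => n; rewrite -/(absn n (x n * y n)) absnM.
by apply: ler_pM; [exact: absn_ge0 | exact: absn_ge0 | exact: xM | exact: yN].
Qed.

Lemma AepsN x : Aeps eps x -> Aeps eps (fun n => - x n).
Proof. by move=> [M xM]; exists M => n; rewrite -/(absn n (- x n)) absnN; apply: xM. Qed.

Lemma AepsB x y : Aeps eps x -> Aeps eps y -> Aeps eps (fun n => x n - y n).
Proof. by move=> Ax Ay; apply: AepsD Ax (AepsN Ay). Qed.

Lemma AepsX x k : Aeps eps x -> Aeps eps (fun n => x n ^+ k).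
Proof.
move=> Ax; elim: k => [|k IH]; first exact: Aeps_cst.
by under eq_fun do rewrite exprS; apply: AepsM.
Qed.

Lemma Aeps_sum k (x : nat -> nat -> R[i]) : (forall i, Aeps eps (x i)) ->
  Aeps eps (fun n => \sum_(i < k) x i n).
Proof.
move=> Ax; elim: k => [|k IH].
  by under eq_fun do rewrite big_ord0; apply: Aeps_cst.
by under eq_fun do rewrite big_ord_recr; apply: AepsD.
Qed.

Lemma Aeps_root k (p : nat -> nat -> R[i]) (x : nat -> R[i]) :
  (forall i, Aeps eps (p i)) ->
  (forall n, x n ^+ k = \sum_(i < k) p i n * x n ^+ i) -> Aeps eps x.
Proof.
move=> Ap xroot; have /choice[M pM] : forall i, exists M, forall n, absn n (p i n) <= M.
  by move=> i; have [M ?] := Ap i; exists M.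
exists (1 + \sum_(i < k) M i) => n; rewrite -/(absn n (x n)).
have S0 : 0 <= \sum_(i < k) cmod (p i n) by rewrite sumr_ge0 // => i _; apply: cmod_ge0.
have : cmod (x n) <= cmod (1 + \sum_(i < k) cmod (p i n))%:C%C.
  rewrite cmodR ger0_norm ?addr_ge0 //.
  exact: (@cauchy_root_bound _ _ (fun i => p i n) _ (xroot n)).
move=> /(ler_absn n) /le_trans; apply.
rewrite /absn cmodR ger0_norm ?addr_ge0 //.
apply: le_trans (powRD_le (eps01 n) ler01 S0) _; rewrite powR1 lerD2l.
apply: le_trans (powR_sum_le _ (eps01 n) (fun i => cmod_ge0 (p i n))) _.
by apply: ler_sum => i _; apply: pM.
Qed.

End Aeps.

Lemma nonprincipal_ultrafilter : exists2 U : set_system nat, UltraFilter U &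
  forall k, \forall m \near U, (k <= m)%N.
Proof.
have [U [Uultra sU]] :=
  ultraFilterLemma (eventually_filter : ProperFilter (\oo : set_system nat)).
by exists U => // k; apply: sU; exists k.
Qed.

Section Homega.
Variables (R : realType) (eps : nat -> R).
Hypothesis eps01 : forall n, 0 < eps n <= 1.
Variable omega : set_system nat.
Hypothesis omega_ultra : UltraFilter omega.
Variables (K : fieldType) (v : K -> R) (phi : (nat -> R[i]) -> K).
Hypothesis hK : is_Homega eps omega v phi.

Local Notation A := (Aeps eps).
Local Notation absn := (absn eps).

Let v_norm : metrized_field_norm v.
Proof. by case: hK => -[]. Qed.

Lemma phi1 : phi (fun=> 1) = 1.
Proof. by case: hK. Qed.

Lemma phiD x y : A x -> A y -> phi (fun n => x n + y n) = phi x + phi y.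
Proof. by case: hK => _ _ phi_rmorph _ _ Ax Ay; case: (phi_rmorph x y Ax Ay). Qed.

Lemma phiM x y : A x -> A y -> phi (fun n => x n * y n) = phi x * phi y.
Proof. by case: hK => _ _ phi_rmorph _ _ Ax Ay; case: (phi_rmorph x y Ax Ay). Qed.

Lemma vphi x : A x -> v (phi x) = ulim omega (fun n => absn n (x n)).
Proof. by case: hK => _ _ _ + _ Ax => ->. Qed.

Lemma phi0 : phi (fun=> 0) = 0.
Proof.
have := phiD (Aeps_cst eps01 0) (Aeps_cst eps01 0).
under eq_fun do rewrite addr0; move=> h.
by apply: (@addrI _ (phi (fun=> 0))); rewrite addr0 -h.
Qed.

Lemma phiN x : A x -> phi (fun n => - x n) = - phi x.
Proof.
move=> Ax; apply/eqP; rewrite -addr_eq0 addrC -(phiD Ax (AepsN Ax)).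
by under eq_fun do rewrite subrr; rewrite phi0.
Qed.

Lemma phiB x y : A x -> A y -> phi (fun n => x n - y n) = phi x - phi y.
Proof. by move=> Ax Ay; rewrite (phiD Ax (AepsN Ay)) (phiN Ay). Qed.

Lemma phiX x k : A x -> phi (fun n => x n ^+ k) = phi x ^+ k.
Proof.
move=> Ax; elim: k => [|k IH]; first exact: phi1.
have -> : (fun n => x n ^+ k.+1) = (fun n => x n * x n ^+ k) by apply/funext => n; rewrite exprS.
by rewrite phiM ?IH ?exprS //; apply: AepsX.
Qed.

Lemma phi_sum k (x : nat -> nat -> R[i]) : (forall i, A (x i)) ->
  phi (fun n => \sum_(i < k) x i n) = \sum_(i < k) phi (x i).
Proof.
move=> Ax; elim: k => [|k IH]; first by under eq_fun do rewrite big_ord0; rewrite phi0 big_ord0.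
have -> : (fun n => \sum_(i < k.+1) x i n) = (fun n => \sum_(i < k) x i n + x k n).
  by apply/funext => n; rewrite big_ord_recr.
by rewrite phiD ?IH ?big_ord_recr //; apply: Aeps_sum.
Qed.

Lemma cvg_absn x : A x -> (fun n => absn n (x n)) @ omega --> v (phi x).
Proof.
move=> [M xM]; rewrite vphi; last by exists M.
apply: (cvg_ulim omega_ultra (M := M)); apply: nearW => n.
by rewrite ger0_norm ?absn_ge0 //; apply: xM.
Qed.

Lemma vphiB_le x y c : A x -> A y ->
  (\forall n \near omega, absn n (x n - y n) <= c) -> v (phi x - phi y) <= c.
Proof.
move=> Ax Ay xyc; rewrite -phiB //.
exact: cvgr_to_le (cvg_absn (AepsB eps01 Ax Ay)) xyc.
Qed.

Lemma phi_eq_near x y : A x -> A y -> (\forall n \near omega, x n = y n) -> phi x = phi y.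
Proof.
move=> Ax Ay xy; apply: (v_sub_le0 v_norm); apply: vphiB_le => //.
by apply: filterS xy => n ->; rewrite subrr absn0.
Qed.

(* Invert b_n where |b_n|^{eps_n} > |b|_omega / 2, which holds along omega. *)
Lemma phi_unit b : A b -> phi b != 0 -> exists2 c, A c & phi b * phi c = 1.
Proof.
move=> Ab b0; set s := v (phi b) / 2.
have vb0 : 0 < v (phi b).
  by rewrite lt_neqAle v_ge0 // andbT eq_sym; apply: contra b0 => /eqP/(v_eq0 v_norm) ->.
have s0 : 0 < s by rewrite divr_gt0.
have bbig : \forall n \near omega, s < absn n (b n).
  by apply: (cvgr_gt _ (cvg_absn Ab)); rewrite ltr_pdivrMr // ltr_pMr // ltr1n.
pose c n := if s < absn n (b n) then (b n)^-1 else 0.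
have Ac : A c.
  exists s^-1 => n; rewrite -/(absn n (c n)) /c; case: ifP => [bn|_].
    by rewrite /absn cmodV powRV ?cmod_ge0 // lef_pV2 ?posrE ?(lt_trans s0 bn) // ltW.
  by rewrite absn0 // invr_ge0 ltW.
exists c => //; rewrite -phiM // -phi1; apply: phi_eq_near (AepsM Ab Ac) (Aeps_cst eps01 1) _.
apply: filterS bbig => n bn; rewrite /c bn mulfV //.
by apply: contraTneq bn => ->; rewrite absn0 // -leNgt ltW.
Qed.

Lemma phi_dense z e : 0 < e -> exists2 w, (phi @` A) w & v (z - w) < e.
Proof.
move=> e0; case: hK => _ _ _ _ /(_ z e e0) [a [b [Aa Ab b0 zab]]].
have [c Ac bc] := phi_unit Ab b0.
exists (phi (fun n => a n * c n)); first by exists (fun n => a n * c n) => //; apply: AepsM.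
by rewrite phiM // -[phi c](mulKf b0) bc mulr1.
Qed.

Lemma range_v : range v = [set r | 0 <= r].
Proof.
apply/seteqP; split => [_ [z _ <-]|r r0]; first exact: v_ge0.
pose x n := (r `^ (eps n)^-1)%:C%C.
have absx n : absn n (x n) = r.
  by rewrite /absn cmodR ger0_norm ?powR_ge0 // -powRrM mulVf ?powRr1 // gt_eqF ?eps_gt0.
have Ax : A x by exists r => n; rewrite -/(absn n (x n)) absx.
exists (phi x) => //; rewrite vphi //; apply: ulimE.
by under eq_fun do rewrite absx; apply: cvg_cst.
Qed.

Local Notation ee := (ulim omega eps).

Lemma cvg_eps : eps @ omega --> ee.
Proof.
apply: (cvg_ulim omega_ultra (M := 1)); apply: nearW => n.
by have /andP[e0 e1] := eps01 n; rewrite ger0_norm // ltW.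
Qed.

Lemma ee_ge0 : 0 <= ee.
Proof. by apply: (cvgr_to_ge cvg_eps); apply: nearW => n; rewrite ltW ?eps_gt0. Qed.

Lemma cvg_powR_eps a : 0 < a -> (fun n => a `^ eps n) @ omega --> a `^ ee.
Proof.
move=> a0; rewrite {2}/powR gt_eqF //; under eq_fun do rewrite /powR gt_eqF //.
by apply: continuous_cvg; [exact: continuous_expR | apply: cvgM; [exact: cvg_eps | exact: cvg_cst]].
Qed.

(* Otherwise omega contains [0, m), on which eps is bounded below by a positive minimum. *)
Lemma ee0_nonprincipal : ee = 0 -> forall m, \forall n \near omega, (m <= n)%N.
Proof.
move=> ee0 m; have [//|small] := in_ultra_setVsetC [set n | (m <= n)%N] omega_ultra.
pose d := \big[Num.min/1]_(i < m) eps i.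
have d0 : 0 < d by apply: lt_bigmin => // i _; apply: eps_gt0.
have : d <= ee.
  apply: (cvgr_to_ge cvg_eps); apply: filterS small => n /negP; rewrite -ltnNge => nm.
  exact: (bigmin_le _ (Ordinal nm) (fun i : 'I_m => eps i)).
by rewrite ee0 leNgt d0.
Qed.

(* Diagonal argument: at coordinate n follow the latest a_m (m <= n) that is, at n,
   already within r_k + 1/(m+1) of a_k for all k <= m. *)
Lemma nonprincipal_image_nested_complete :
  (forall m, \forall n \near omega, (m <= n)%N) -> nested_ball_complete v (phi @` A).
Proof.
move=> cofinite a r Sa ar.
have /choice[al alP] : forall k, exists al, A al /\ phi al = a k.
  by move=> k; have [al ? ?] := Sa k; exists al.
have Aal k : A (al k) by case: (alP k).
have r0 k : 0 <= r k by apply: le_trans (ar k k (leqnn k)); apply: v_ge0.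
pose S m n := (m <= n)%N /\
  forall k, (k <= m)%N -> absn n (al m n - al k n) < r k + m.+1%:R^-1.
have S0 n : S 0%N n.
  by split=> // k; rewrite leqn0 => /eqP->; rewrite subrr absn0 // ltr_pwDr ?invr_gt0.
have S_near m : \forall n \near omega, S m n.
  have near_k (k : 'I_m.+1) : \forall n \near omega,
      absn n (al m n - al k n) < r k + m.+1%:R^-1.
    apply: cvgr_lt (cvg_absn (AepsB eps01 (Aal m) (Aal k))) _ _.
    by rewrite phiB // !(alP _).2 ltr_pwDr ?invr_gt0 // ar // -ltnS.
  apply: filterS2 (cofinite m) (filter_forall _ near_k) => n mn near_n.
  by split=> // k km; apply: (near_n (Ordinal (km : (k < m.+1)%N))).
have ex_m n : exists m, `[< S m n >] by exists 0%N; apply/asboolP.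
have ub_m n m : `[< S m n >] -> (m <= n)%N by move/asboolP => [].
pose mx n := ex_maxn (ex_m n) (ub_m n).
have mxP n : S (mx n) n /\ forall j, S j n -> (j <= mx n)%N.
  by rewrite /mx; case: ex_maxnP => i /asboolP Si imax; split=> // j /asboolP /imax.
pose x n := al (mx n) n.
have Ax : A x.
  have [M alM] := Aal 0%N.
  exists (r 0%N + 1 + M) => n; rewrite -/(absn n (x n)) -[x n](subrK (al 0%N n)).
  apply: le_trans (absnD eps01 _ _ _) (lerD _ (alM n)); rewrite ltW //.
  by apply: lt_le_trans ((mxP n).1.2 0%N (leq0n _)) _; rewrite lerD2l invf_le1 ?ler1n.
exists (phi x); first by exists x.
move=> k; rewrite -(alP k).2; apply: (@ler_add_harmonic _ _ _ 1 k) => j kj.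
apply: vphiB_le => //; apply: filterS (S_near j) => n Sjn.
have [_ Smx] := (mxP n).1; have jmx := (mxP n).2 j Sjn.
apply: ltW; apply: lt_le_trans (Smx k (leq_trans kj jmx)) _.
by rewrite lerD2l mul1r lef_pV2 ?posrE ?ltr0n // ler_nat ltnS.
Qed.

Definition phic (z : R[i]) : K := phi (fun=> z).

Lemma phicB : {morph phic : x y / x - y}.
Proof. by move=> x y; rewrite /phic -phiB //; apply: Aeps_cst. Qed.

Lemma phicM : {morph phic : x y / x * y}.
Proof. by move=> x y; rewrite /phic -phiM //; apply: Aeps_cst. Qed.

HB.instance Definition _ := GRing.isZmodMorphism.Build R[i] K phic phicB.
HB.instance Definition _ := GRing.isMonoidMorphism.Build R[i] K phic (conj phi1 phicM).

Section PositiveExponent.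
Hypothesis ee_gt0 : 0 < ee.

Lemma v_phic z : v (phic z) = cmod z `^ ee.
Proof.
have [->|z0] := eqVneq z 0; first by rewrite rmorph0 (v0 v_norm) cmod0 powR0 // gt_eqF.
rewrite vphi; last exact: Aeps_cst.
apply: (ulimE omega_ultra); apply: cvg_powR_eps.
by rewrite lt_neqAle cmod_ge0 andbT eq_sym; apply: contra z0 => /eqP/cmod_eq0 ->.
Qed.

Lemma near_eps_gt : \forall n \near omega, ee / 2 < eps n.
Proof. by apply: (cvgr_gt _ cvg_eps); rewrite ltr_pdivrMr // ltr_pMr // ltr1n. Qed.

Lemma Aeps_cmod_bounded a : A a -> exists B, \forall n \near omega, cmod (a n) <= B.
Proof.
move=> [M aM]; exists (Num.max 1 (M `^ (ee / 2)^-1)).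
apply: filterS near_eps_gt => n en; rewrite le_max.
have [//|a1] := leP (cmod (a n)) 1.
rewrite ler_powRV ?divr_gt0 ?cmod_ge0 ?(le_trans (absn_ge0 eps n (a n)) (aM n)) ?orbT //.
exact: le_trans (ler_powR (ltW a1) (ltW en)) (aM n).
Qed.

(* Along omega, eps_n > e/2 and |a_n - c| < 1, so |a_n - c|^{eps_n} <= |a_n - c|^{e/2} -> 0. *)
Lemma phi_phic a : A a -> phi a = phic (clim omega a).
Proof.
move=> Aa; have [B aB] := Aeps_cmod_bounded Aa; set c := clim omega a.
apply: (v_sub_le0 v_norm); apply/ler_addgt0Pr => d d0; rewrite add0r.
apply: vphiB_le (Aeps_cst eps01 c) _ => //.
pose d1 := Num.min d 1; have d10 : 0 < d1 by rewrite lt_min d0 ltr01.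
have e20 : 0 < ee / 2 by rewrite divr_gt0.
have := near_clim omega_ultra aB (powR_gt0 (ee / 2)^-1 d10).
apply: filterS2 near_eps_gt => n en /ltW anc.
have anc1 : cmod (a n - c) <= 1.
  apply: le_trans anc _; have := @ler_powRl _ (ee / 2)^-1 d1 1; rewrite powR1; apply.
  - by rewrite invr_ge0 ltW.
  - exact: ltW.
  - by rewrite ge_min lexx orbT.
apply: le_trans (ge0_ger_powR _ (q := ee / 2) _) _; first by rewrite cmod_ge0 anc1.
  by rewrite e20 ltW.
rewrite ler_powRV ?cmod_ge0 ?(ltW d10) // in anc.
by apply: le_trans anc _; rewrite ge_min lexx.
Qed.

(* Through phic, a chain of balls of H(omega) is a chain of balls of C with radii r_k^{1/e};
   the ultralimit of their centers along a non-principal ultrafilter lies in all of them. *)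
Lemma ee_pos_image_nested_complete : nested_ball_complete v (phi @` A).
Proof.
move=> a r Sa ar.
have /choice[c ca] : forall k, exists c, phic c = a k.
  by move=> k; have [al Aal <-] := Sa k; exists (clim omega al); rewrite phi_phic.
have r0 k : 0 <= r k by apply: le_trans (v_ge0 v_norm _) (ar k k (leqnn k)).
have cc k m : (k <= m)%N -> cmod (c m - c k) <= r k `^ ee^-1.
  by move=> km; rewrite ler_powRV ?cmod_ge0 // -v_phic phicB !ca ar.
have [U Uultra Ucofinite] := nonprincipal_ultrafilter.
have cB : \forall m \near U, cmod (c m) <= cmod (c 0%N) + r 0%N `^ ee^-1.
  apply: nearW => m; rewrite -[c m](subrK (c 0%N)) addrC.
  by apply: le_trans (ler_cmodD _ _) _; rewrite lerD2l cc.
exists (phic (clim U c)); first by exists (fun=> clim U c) => //; apply: Aeps_cst.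
move=> k; rewrite -ca -phicB v_phic -ler_powRV ?cmod_ge0 //.
by apply: (ler_clim_dist Uultra cB); apply: filterS (Ucofinite k) => m; apply: cc.
Qed.

Lemma ee_pos_archimedean : archimedean_norm v.
Proof.
move=> nonarch; have := nonarch 1 1.
rewrite (v1 v_norm) maxxx -(rmorph1 phic) -rmorphD v_phic.
have two_gt1 : 1 < cmod (1 + 1 : R[i]).
  by apply: lt_le_trans (ler_Re_cmod _); rewrite /= ger0_norm ?addr_ge0 // ltrDl.
by rewrite leNgt /powR gt_eqF ?(lt_trans ltr01 two_gt1) // expR_gt1 mulr_gt0 // ln_gt0.
Qed.

End PositiveExponent.

Lemma image_phi_nested_complete : nested_ball_complete v (phi @` A).
Proof.
have [ee0|ee_pos] := eqVneq ee 0.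
  exact: nonprincipal_image_nested_complete (ee0_nonprincipal ee0).
by apply: ee_pos_image_nested_complete; rewrite lt_neqAle eq_sym ee_pos ee_ge0.
Qed.

Lemma image_phi_full : phi @` A = setT.
Proof.
apply: (dense_nested_ball_complete_full v_norm); first exact: phi_dense.
exact: image_phi_nested_complete.
Qed.

Lemma Homega_spherically_complete : spherically_complete v.
Proof.
apply: (nested_ball_complete_spherically_complete v_norm).
by rewrite -image_phi_full; apply: image_phi_nested_complete.
Qed.

Lemma Homega_closed : GRing.closed_field_axiom K.
Proof.
move=> n P n0.
have /choice[p pP] : forall i, exists p, A p /\ phi p = P i.
  move=> i; have [p Ap <-] : (phi @` A) (P i) by rewrite image_phi_full.
  by exists p.
have Ap i : A (p i) by case: (pP i).
have /choice[x xroot] : forall t, exists y, y ^+ n = \sum_(i < n) p i t * y ^+ i.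
  by move=> t; apply: (@solve_monicpoly _ n (fun i => p i t) n0).
have Ax := Aeps_root eps01 Ap xroot.
exists (phi x); rewrite -phiX //.
have -> : (fun t => x t ^+ n) = (fun t => \sum_(i < n) p i t * x t ^+ i).
  by apply/funext => t; apply: xroot.
rewrite (@phi_sum n (fun i t => p i t * x t ^+ i)) => [|i]; last first.
  by apply: AepsM; [apply: Ap | apply: AepsX].
by apply: eq_bigr => i _; rewrite phiM ?phiX ?(pP i).2 //; apply: AepsX.
Qed.

Lemma ee0_non_archimedean : ee = 0 -> non_archimedean v.
Proof.
move=> ee0 z1 z2.
have [x1 A1 <-] : (phi @` A) z1 by rewrite image_phi_full.
have [x2 A2 <-] : (phi @` A) z2 by rewrite image_phi_full.
wlog x12 : x1 x2 A1 A2 / \forall n \near omega, cmod (x1 n) <= cmod (x2 n).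
  move=> wlog_le.
  have [|x21] := in_ultra_setVsetC [set n | cmod (x1 n) <= cmod (x2 n)] omega_ultra.
    exact: wlog_le.
  rewrite addrC maxC; apply: wlog_le => //.
  by apply: filterS x21 => n /negP; rewrite -ltNge => /ltW.
rewrite -phiD // le_max; apply/orP; right.
have lim2 : (fun n => 2 `^ eps n * absn n (x2 n)) @ omega --> v (phi x2).
  have -> : v (phi x2) = 2 `^ ee * v (phi x2) by rewrite ee0 powRr0 mul1r.
  by apply: cvgM; [exact: cvg_powR_eps | exact: cvg_absn].
apply: (ler_cvg_to (cvg_absn (AepsD eps01 A1 A2)) lim2).
by apply: filterS x12 => n; apply: absnD_le2.
Qed.

Lemma ee_pos_isometry : 0 < ee ->
  exists f : {rmorphism R[i] -> K}, bijective f /\ forall z, v (f z) = cmod z `^ ee.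
Proof.
move=> ee_gt0; exists phic; split; last exact: v_phic.
have /choice[g phicg] : forall z, exists c, phic c = z.
  move=> z; have [a Aa <-] : (phi @` A) z by rewrite image_phi_full.
  by exists (clim omega a); rewrite phi_phic.
by exists g => [c|z] //; apply: (fmorph_inj phic); exact: phicg.
Qed.

End Homega.

Theorem mainTheorem6 (R : realType) (eps : nat -> R)
  (heps : forall n, 0 < eps n <= 1)
  (omega : set_system nat) (homega : UltraFilter omega)
  (K : fieldType) (v : K -> R) (phi : (nat -> R[i]) -> K)
  (hK : is_Homega eps omega v phi) :
  [/\ GRing.closed_field_axiom K,
      spherically_complete v,
      range v = [set r : R | 0 <= r],
      (0 < ulim omega eps ->
         (exists f : {rmorphism R[i] -> K}, bijective f /\
            forall z, v (f z) = cmod z `^ ulim omega eps)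
         /\ archimedean_norm v)
    & (ulim omega eps = 0 -> non_archimedean v)].
Proof.
split.
- exact: (Homega_closed heps homega hK).
- exact: (Homega_spherically_complete heps homega hK).
- exact: (range_v heps homega hK).
- move=> ee_pos; split.
  + exact: (ee_pos_isometry heps homega hK ee_pos).
  + exact: (ee_pos_archimedean heps homega hK ee_pos).
- exact: (ee0_non_archimedean heps homega hK).
Qed.
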